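(* With the notation of the context, for every instance with two candidates $P,Q$ at least one of the following two inequalities holds: $$\sum_{l=k}^m\frac{\tau_{l+1}-\delta}{\tau_{l+1}-1}|B_l|\le\sum_{l=1}^m\frac{\delta\tau_l-1}{\tau_l+1}|A_l|+\sum_{l=1}^{k-1}\frac{\delta-\tau_{l+1}}{\tau_{l+1}+1}|B_l|,$$ $$\sum_{l=k}^m\frac{\tau_{l+1}-\delta}{\tau_{l+1}-1}|A_l|\le\sum_{l=1}^m\frac{\delta\tau_l-1}{\tau_l+1}|B_l|+\sum_{l=1}^{k-1}\frac{\delta-\tau_{l+1}}{\tau_{l+1}+1}|A_l|.$$ Hence a resolute rule selecting $P$ only when the first holds and $Q$ only when the second holds always exists.
   Context: Thresholds $1\le\tau_1<\dots<\tau_m$, $\tau_0=1/\tau_1$, $\tau_{m+1}=\infty$; $\delta=\max_{0\le l\le m}\frac{\tau_l\tau_{l+1}+2\tau_{l+1}-1}{\tau_l\tau_{l+1}+1}$ (the $l=m$ term meaning $(\tau_m+2)/\tau_m$); $k\in\{1,\dots,m\}$ satisfies $\tau_k\le\delta<\tau_{k+1}$; $\frac{\tau_{m+1}-\delta}{\tau_{m+1}-1}$ is interpreted as $1$. Voters and candidates lie in a metric space $(X,d)$; voter $i$'s preference strength for $P$ over $Q$ is $\alpha_i^{PQ}=d(i,Q)/d(i,P)$ when $d(i,P)\le d(i,Q)$. $A_l=\{i: d(i,P)\le d(i,Q),\ \tau_l\le\alpha_i^{PQ}<\tau_{l+1}\}$ and $B_l=\{j: d(j,Q)\le d(j,P),\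 \tau_l\le\alpha_j^{QP}<\tau_{l+1}\}$ for $l=1,\dots,m$. *)

From HB Require Import structures.
From mathcomp Require Import all_boot all_order all_algebra.
Set Implicit Arguments. Unset Strict Implicit. Unset Printing Implicit Defensive.
Import Order.TTheory GRing.Theory Num.Theory.
Local Open Scope ring_scope.

Definition is_metric (R : realFieldType) (X : Type) (d : X -> X -> R) : Prop :=
  [/\ forall x y, 0 <= d x y,
      forall x y, d x y = 0 <-> x = y,
      forall x y, d x y = d y x
    & forall x y z, d x z <= d x y + d y z].

(* thresholds tau_1 < ... < tau_m are tau 1, ..., tau m;
   tau_0 := 1/tau_1 ; tau_{m+1} := +infinity (handled explicitly) *)
Definition tauE (R : realFieldType) (tau : nat -> R) (l : nat) : R :=
  if l == 0%N then (tau 1%N)^-1 else tau l.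

Definition dterm (R : realFieldType) (tau : nat -> R) (m l : nat) : R :=
  if l == m then (tau m + 2) / tau m
  else (tauE tau l * tau l.+1 + 2 * tau l.+1 - 1) / (tauE tau l * tau l.+1 + 1).

Definition delta (R : realFieldType) (tau : nat -> R) (m : nat) : R :=
  \big[Num.max/dterm tau m 0]_(l < m.+1) dterm tau m l.

(* [inband tau m l dP dQ] : the strength alpha = dQ/dP satisfies
   tau_l <= alpha < tau_{l+1} (with tau_{m+1} = infinity).
   Conventions: alpha = +infinity if dP = 0 < dQ; alpha = 1 if dP = dQ = 0. *)
Definition inband (R : realFieldType) (tau : nat -> R) (m l : nat) (dP dQ : R) : bool :=
  if dP == 0 then
    (if dQ == 0 then (tau l <= 1) && ((l == m) || (1 < tau l.+1)) else l == m)
  else (tau l <= dQ / dP) && ((l == m) || (dQ / dP < tau l.+1)).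

(* A_l : voters preferring P to Q with strength in [tau_l, tau_{l+1}) ;
   B_l is obtained by swapping P and Q. *)
Definition bandset (R : realFieldType) (X : Type) (d : X -> X -> R)
  (V : finType) (loc : V -> X) (tau : nat -> R) (m : nat) (P Q : X) (l : nat)
  : {set V} :=
  [set i | (d (loc i) P <= d (loc i) Q) && inband tau m l (d (loc i) P) (d (loc i) Q)].

(* (tau_{l+1} - delta)/(tau_{l+1} - 1), interpreted as 1 when l = m *)
Definition coefHigh (R : realFieldType) (tau : nat -> R) (m : nat) (dl : R) (l : nat) : R :=
  if l == m then 1 else (tau l.+1 - dl) / (tau l.+1 - 1).

Definition coefA (R : realFieldType) (tau : nat -> R) (dl : R) (l : nat) : R :=
  (dl * tau l - 1) / (tau l + 1).

Definition coefLow (R : realFieldType) (tau : nat -> R) (dl : R) (l : nat) : R :=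
  (dl - tau l.+1) / (tau l.+1 + 1).

From HB Require Import structures.
From mathcomp Require Import all_boot all_order all_algebra.
From mathcomp Require Import lra.
Set Implicit Arguments. Unset Strict Implicit. Unset Printing Implicit Defensive.
Import Order.TTheory GRing.Theory Num.Theory.
Local Open Scope ring_scope.

(* Write a_l = |A_l| and b_l = |B_l|.  The sum of the two
   inequalities of the theorem is the single inequality
     sum_{l=k}^m H_l (a_l + b_l)
       <= sum_{l=1}^m C_l (a_l + b_l) + sum_{l=1}^{k-1} L_l (a_l + b_l)
   with H, C, L the three coefficient families; if both inequalities failed,
   their sum would fail too.  This summed inequality holds for ANY family of
   nonnegative weights w_l in place of a_l + b_l, and it follows termwise:
   - for k <= l <= m, H_l <= C_l, which is a rearrangement of the l-th term
     of the maximum defining delta being at most delta;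
   - for 1 <= l < k, C_l + L_l >= 0, because tau_{l+1} <= tau_k <= delta. *)

Lemma one_of_crossed_le (R : realDomainType) (ha hb ca cb la lb : R) :
  ha + hb <= (ca + cb) + (la + lb) -> hb <= ca + lb \/ ha <= cb + la.
Proof.
move=> h; case: (lerP hb (ca + lb)) => h1; first by left.
by right; lra.
Qed.

Section Coefficients.

Variables (R : realFieldType) (tau : nat -> R) (m : nat).
Hypothesis htau1 : 1 <= tau 1%N.
Hypothesis htau : forall l, (1 <= l)%N -> (l < m)%N -> tau l < tau l.+1.

Lemma tau_mono i j : (1 <= i)%N -> (i <= j)%N -> (j <= m)%N -> tau i <= tau j.
Proof.
move=> hi; elim: j => [|j IH] hij hjm; first by have := leq_trans hi hij.
rewrite leq_eqVlt in hij; case/orP: hij => [/eqP -> //|hij].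
apply: le_trans (IH hij (ltnW hjm)) _; apply/ltW/htau => //.
exact: leq_trans hi hij.
Qed.

Lemma tau_ge1 l : (1 <= l)%N -> (l <= m)%N -> 1 <= tau l.
Proof. by move=> h1 h2; apply: le_trans htau1 (tau_mono (leqnn 1) h1 h2). Qed.

Lemma dterm_le_delta l : (l <= m)%N -> dterm tau m l <= delta tau m.
Proof.
move=> hl; rewrite /delta.
exact: (@le_bigmax _ R _ (dterm tau m 0) (fun i : 'I_m.+1 => dterm tau m i)
          (Ordinal (hl : (l < m.+1)%N))).
Qed.

(* For 1 <= l <= m: (tau_{l+1} - delta)/(tau_{l+1} - 1) <= (delta tau_l - 1)/(tau_l + 1).
   Clearing denominators, this is exactly dterm l <= delta. *)
Lemma coefHigh_le_coefA l : (1 <= l)%N -> (l <= m)%N ->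
  coefHigh tau m (delta tau m) l <= coefA tau (delta tau m) l.
Proof.
move=> hl1 hlm; set dl := delta tau m.
have t1 := tau_ge1 hl1 hlm.
have hl0 : (l == 0%N) = false by case: l hl1 {hlm t1}.
have hdt := dterm_le_delta hlm; rewrite -/dl /dterm /tauE hl0 in hdt.
rewrite /coefHigh /coefA.
case: eqP hdt => [el|/eqP hne] hdt.
- rewrite el in t1 *.
  have tp : 0 < tau m by lra.
  rewrite ler_pdivlMr; last lra.
  by rewrite mul1r; move: hdt; rewrite ler_pdivrMr // => hdt; nra.
- have t2 : tau l < tau l.+1 by apply: htau => //; rewrite ltn_neqAle hne.
  have p1 : 0 < tau l * tau l.+1 + 1 by nra.
  rewrite ler_pdivrMr // in hdt.
  rewrite ler_pdivrMr; last lra.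
  rewrite mulrAC ler_pdivlMr; last lra.
  nra.
Qed.

Lemma coefA_coefLow_ge0 (dl : R) l : 1 <= tau l -> 1 <= tau l.+1 ->
  tau l.+1 <= dl -> 0 <= coefA tau dl l + coefLow tau dl l.
Proof.
move=> t1 t2 t2dl.
have dl1 : 1 <= dl * tau l by rewrite -[1]mulr1 ler_pM // ?ler01; lra.
by rewrite /coefA /coefLow addr_ge0 // divr_ge0 //; lra.
Qed.

Lemma weighted_coef_ineq (k : nat) (w : nat -> R) :
  (1 <= k)%N -> (k <= m)%N -> tau k <= delta tau m ->
  (forall l, 0 <= w l) ->
  \sum_(k <= l < m.+1) coefHigh tau m (delta tau m) l * w l
    <= \sum_(1 <= l < m.+1) coefA tau (delta tau m) l * w l
       + \sum_(1 <= l < k) coefLow tau (delta tau m) l * w l.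
Proof.
move=> hk1 hkm hkd w0.
rewrite (big_cat_nat hk1 (leqW hkm)) /= [X in X + _]addrC -addrA.
rewrite -[X in X <= _]addr0 lerD //.
  apply: ler_sum_nat => l /andP [hkl hlm]; apply: ler_wpM2r => //.
  exact: coefHigh_le_coefA (leq_trans hk1 hkl) hlm.
rewrite -big_split /= big_nat_cond; apply: sumr_ge0 => l /andP [/andP [hl1 hlk] _].
rewrite -mulrDl; apply: mulr_ge0 => //.
have hlm : (l < m)%N := leq_trans hlk hkm.
apply: coefA_coefLow_ge0; [exact: tau_ge1 (ltnW hlm) | exact: tau_ge1 hlm |].
exact: le_trans (tau_mono (ltn0Sn l) hlk hkm) hkd.
Qed.

End Coefficients.

Lemma sum_mulrDr (R : ringType) (F a b : nat -> R) (lo hi : nat) :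
  \sum_(lo <= l < hi) F l * (a l + b l)
    = \sum_(lo <= l < hi) F l * a l + \sum_(lo <= l < hi) F l * b l.
Proof. by rewrite -big_split /=; apply: eq_bigr => l _; rewrite mulrDr. Qed.

Theorem mainTheorem10 (R : realFieldType) (X : Type) (d : X -> X -> R)
  (hd : is_metric d) (V : finType) (loc : V -> X) (P Q : X)
  (m : nat) (tau : nat -> R) (k : nat)
  (hm : (1 <= m)%N) (htau1 : 1 <= tau 1%N)
  (htau : forall l, (1 <= l)%N -> (l < m)%N -> tau l < tau l.+1)
  (hk1 : (1 <= k)%N) (hkm : (k <= m)%N)
  (hk : tau k <= delta tau m /\ (k == m \/ delta tau m < tau k.+1)) :
  let dl := delta tau m in
  let A := bandset d loc tau m P Q in
  let B := bandset d loc tau m Q P in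
  (\sum_(k <= l < m.+1) coefHigh tau m dl l * #|B l|%:R
     <= \sum_(1 <= l < m.+1) coefA tau dl l * #|A l|%:R
        + \sum_(1 <= l < k) coefLow tau dl l * #|B l|%:R)
  \/
  (\sum_(k <= l < m.+1) coefHigh tau m dl l * #|A l|%:R
     <= \sum_(1 <= l < m.+1) coefA tau dl l * #|B l|%:R
        + \sum_(1 <= l < k) coefLow tau dl l * #|A l|%:R).
Proof.
move=> dl A B.
have summed := @weighted_coef_ineq R tau m htau1 htau k
  (fun l => #|A l|%:R + #|B l|%:R) hk1 hkm hk.1 (fun l => addr_ge0 (ler0n _ _) (ler0n _ _)).
rewrite /= !sum_mulrDr in summed.
exact: one_of_crossed_le summed.
Qed.
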